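(* Let $Q$ be an $n$-dimensional manifold, $k\ge 1$, and let $L:\mathbb{R}^k\times T^1_kQ\to\mathbb{R}$ be a smooth Lagrangian, written in local coordinates as $L(x^\mu,q^i,q^i_\mu)$. Let $\widetilde L:\mathbb{R}^k\times T^1_kTQ\to\mathbb{R}$ be the prolonged Lagrangian, given in the induced coordinates $(x^\mu,q^i,v^i,q^i_\mu,v^i_\mu)$ by $$\widetilde{L}(x^{\mu},q^i,v^{i},q^i_{\mu},v^{i}_{\mu})=\frac{\partial L}{\partial q^{i}}(x^{\mu},q^i,q^i_{\mu})\,v^{i}+\frac{\partial L}{\partial q^i_{\mu}}(x^{\mu},q^i,q^i_{\mu})\,v^i_{\mu}$$ (summation over repeated indices). Then: (1) For a map $\psi:U\subset\mathbb{R}^k\to TQ$, $\psi(\mathbf{x})=(q^i(\mathbf{x}),v^i(\mathbf{x}))$, with $q^i_\mu=\partial q^i/\partial x^\mu$ and $v^i_\mu=\partial v^i/\partial x^\mu$ evaluated along $\psi$, the Euler–Lagrange field equations of $\widetilde L$, $$\sum_\mu\frac{d}{dx^{\mu}}\Big(\frac{\partial \widetilde L}{\partial q^i_{\mu}}\Big)-\frac{\partial \widetilde L}{\partial q^i}=0,\qquad \sum_\mu\frac{d}{dx^{\mu}}\Big(\frac{\partial \widetilde L}{\partial v^i_{\mu}}\Big)-\frac{\partial \widetilde L}{\partial v^i}=0,\qquad 1\le i\le n,$$ are equivalent to the system $$\sum_\mu\frac{d}{dx^{\mu}}\Big[\frac{\partial^2 L}{\partial q^j\partial q^i_{\mu}}v^j+\frac{\partial^2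 L}{\partial q^j_{\gamma}\partial q^i_{\mu}}v^j_{\gamma}\Big]-\frac{\partial^2 L}{\partial q^i\partial q^j}v^j-\frac{\partial^2 L}{\partial q^i\partial q^j_{\gamma}}v^j_{\gamma}=0,\qquad \sum_\mu\frac{d}{dx^{\mu}}\Big(\frac{\partial L}{\partial q^i_{\mu}}\Big)-\frac{\partial L}{\partial q^i}=0,$$ i.e. the Jacobi field equations for $L$ together with the Euler–Lagrange field equations for $L$. (2) If $L$ is regular, then $\widetilde L$ is regular.
   Context: $T^1_kQ=TQ\oplus\cdots\oplus TQ$ ($k$ copies) is the bundle of $k^1$-velocities of $Q$, with local coordinates $(q^i,q^i_\mu)$, $1\le i\le n$, $1\le\mu\le k$, where $q^i_\mu$ are the components of the $\mu$-th tangent vector; $\mathbb{R}^k$ has coordinates $\mathbf{x}=(x^1,\dots,x^k)$. Similarly $T^1_kTQ$ is the bundle of $k^1$-velocities of the manifold $TQ$, with induced coordinates $(q^i,v^i,q^i_\mu,v^i_\mu)$ where $(q^i,v^i)$ are coordinates on $TQ$. The operator $\frac{d}{dx^\mu}$ denotes the total derivative along the field. A Lagrangian $L$ on $\mathbb{R}^k\times T^1_kQ$ is called regular if the matrix $\big(\frac{\partial^2 L}{\partial q^i_\mu\partial q^j_\nu}\big)$ (rows indexed by $(i,\mu)$, columns by $(j,\nu)$) is nonsingular at every point; regularity of $\widetilde L$ means nonsingularity of its Hessian with respect to all the velocity variables $(q^i_\mu,v^i_\mu)$. *)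

From HB Require Import structures.
From mathcomp Require Import all_boot all_order all_algebra.
From mathcomp Require Import all_classical all_reals all_analysis.
Set Implicit Arguments. Unset Strict Implicit. Unset Printing Implicit Defensive.
Import Order.TTheory GRing.Theory Num.Theory.
Import numFieldNormedType.Exports.
Local Open Scope classical_set_scope.
Local Open Scope ring_scope.

Section Defs.
Variable R : realType.

Fixpoint iderive (V W : normedModType R) (vs : seq V) (f : V -> W) : V -> W :=
  match vs with
  | [::] => f
  | v :: vs' => iderive vs' ('D_v f)
  end.

Definition smooth (V W : normedModType R) (f : V -> W) : Prop :=
  forall (vs : seq V) (p : V), differentiable (iderive vs f) p.

Definition smooth_on (V W : normedModType R) (U : set V) (f : V -> W) : Prop :=
  forall (vs : seq V) (p : V), U p -> differentiable (iderive vs f) p.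

(* Local coordinates on R^k x T^1_k M, M of dimension m:
   a point is ((x, q), qd) with x^mu = x 0 mu, q^i = q 0 i, q^i_mu = qd i mu. *)
Definition Jet (k m : nat) := (('rV[R]_k * 'rV[R]_m) * 'M[R]_(m, k))%type.

Definition ex (k m : nat) (mu : 'I_k) : Jet k m := ((delta_mx 0 mu, 0), 0).
Definition eq_ (k m : nat) (i : 'I_m) : Jet k m := ((0, delta_mx 0 i), 0).
Definition eqd (k m : nat) (i : 'I_m) (mu : 'I_k) : Jet k m := ((0, 0), delta_mx i mu).

Definition dq (k m : nat) (F : Jet k m -> R) (i : 'I_m) : Jet k m -> R :=
  'D_(eq_ k i) F.
Definition dqd (k m : nat) (F : Jet k m -> R) (i : 'I_m) (mu : 'I_k) : Jet k m -> R :=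
  'D_(eqd i mu) F.

(* Coordinates on TQ are
   (q, v) in 'rV_(n + n): q^i = index lshift n i, v^i = index rshift n i;
   velocities: q^i_mu = row (lshift n i), v^i_mu = row (rshift n i). *)
Definition Ltilde (k n : nat) (L : Jet k n -> R) (p : Jet k (n + n)) : R :=
  let x := p.1.1 in let w := p.1.2 in let W := p.2 in
  let q := lsubmx w in let v := rsubmx w in
  let qd := usubmx W in let vd := dsubmx W in
  let pL := ((x, q), qd) in
  \sum_(i < n) dq L i pL * v 0 i
  + \sum_(i < n) \sum_(mu < k) dqd L i mu pL * vd i mu.

(* Regularity: the Hessian with respect to all velocity variables q^i_mu,
   rows indexed by (i,mu), columns by (j,nu) (pairs enumerated via the
   standard bijection 'I_m * 'I_k ~ 'I_(m*k) used by mxvec), is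
   nonsingular at every point. *)
Definition unvec (m k : nat) (a : 'I_(m * k)) : 'I_m * 'I_k :=
  enum_val (cast_ord (esym (mxvec_cast m k)) a).

Definition velHessian (k m : nat) (L : Jet k m -> R) (p : Jet k m) : 'M[R]_(m * k) :=
  \matrix_(a < m * k, b < m * k)
     dqd (dqd L (unvec a).1 (unvec a).2) (unvec b).1 (unvec b).2 p.

Definition regular (k m : nat) (L : Jet k m -> R) : Prop :=
  forall p : Jet k m, velHessian L p \in unitmx.

Definition ek (k : nat) (mu : 'I_k) : 'rV[R]_k := delta_mx 0 mu.

Definition j1 (k m : nat) (phi : 'rV[R]_k -> 'rV[R]_m) (x : 'rV[R]_k) : Jet k m :=
  ((x, phi x), \matrix_(i < m, mu < k) 'D_(ek mu) (fun y => phi y 0 i) x).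

Definition dtot (k : nat) (G : 'rV[R]_k -> R) (mu : 'I_k) : 'rV[R]_k -> R :=
  'D_(ek mu) G.

Definition EL (k m : nat) (F : Jet k m -> R) (phi : 'rV[R]_k -> 'rV[R]_m)
  (i : 'I_m) (x : 'rV[R]_k) : Prop :=
  \sum_(mu < k) dtot (fun y => dqd F i mu (j1 phi y)) mu x - dq F i (j1 phi x) = 0.

Definition Jacobi (k n : nat) (L : Jet k n -> R) (q v : 'rV[R]_k -> 'rV[R]_n)
  (i : 'I_n) (x : 'rV[R]_k) : Prop :=
  let vd := fun y (j : 'I_n) (g : 'I_k) => 'D_(ek g) (fun z => v z 0 j) y in
  \sum_(mu < k) dtot (fun y =>
       \sum_(j < n) dq (dqd L i mu) j (j1 q y) * v y 0 j
     + \sum_(j < n) \sum_(g < k) dqd (dqd L i mu) j g (j1 q y) * vd y j g) mu x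
  - \sum_(j < n) dq (dq L j) i (j1 q x) * v x 0 j
  - \sum_(j < n) \sum_(g < k) dq (dqd L j g) i (j1 q x) * vd x j g = 0.

End Defs.

From HB Require Import structures.
From mathcomp Require Import all_boot all_order all_algebra.
From mathcomp Require Import all_classical all_reals all_analysis.
From mathcomp Require Import lra.
Set Implicit Arguments. Unset Strict Implicit. Unset Printing Implicit Defensive.
Import Order.TTheory GRing.Theory Num.Theory.
Import numFieldNormedType.Exports.
Local Open Scope classical_set_scope.
Local Open Scope ring_scope.

(* The prolonged Lagrangian is linear in the fibre variables (v, v_mu), with
   coefficients the first partial derivatives of L pulled back along TQ -> Q.
   A derivative of it in a fibre direction just picks out a coefficient:
   d Ltilde / d v^i = d L / d q^i and d Ltilde / d v^i_mu = d L / d q^i_mu, so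
   the v-equations of Ltilde are the Euler-Lagrange equations of L.  A
   derivative in a base direction differentiates the coefficients; after
   exchanging the order of differentiation (Schwarz's theorem, a consequence
   of the mean value theorem) the q-equations of Ltilde become the Jacobi
   equations of L.  For the same reason the velocity Hessian of Ltilde, in the
   blocks (q_mu, v_mu), is [[*, H], [H, 0]] with H the velocity Hessian of L,
   so it has a trivial kernel as soon as H does. *)

Section Schwarz.
Variables (R : realType) (V : normedModType R).
Implicit Types (f : V -> R) (a p u v : V) (s t h : R).

Let line_quotient f a u s :
  (fun h => h^-1 *: (((fun t => f (a + t *: u)) \o shift s) (h *: 1) - f (a + s *: u)))
  = (fun h => h^-1 *: ((f \o shift (a + s *: u)) (h *: u) - f (a + s *: u))).
Proof.
by apply/funext => h /=; rewrite scaler1 scalerDl addrCA addrC.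
Qed.

Lemma derive_line f a u s :
  'D_1 (fun t => f (a + t *: u)) s = 'D_u f (a + s *: u).
Proof. by rewrite /derive line_quotient. Qed.

Lemma derivable_line f a u s :
  derivable (fun t => f (a + t *: u)) s 1 = derivable f (a + s *: u) u.
Proof. by rewrite /derivable line_quotient. Qed.

Lemma MVT_derivable (g : R -> R) h : 0 < h -> (forall t, derivable g t 1) ->
  exists2 c, 0 <= c <= h & g h - g 0 = 'D_1 g c * h.
Proof.
move=> h0 dg.
have [c ch ->] := MVT h0 (fun t _ => derivableP (dg t))
  (derivable_within_continuous (fun t _ => dg t)).
by exists c; [move: ch; rewrite in_itv /= => /andP[/ltW -> /ltW ->] | rewrite subr0].
Qed.

Lemma second_difference_MVT f p u v h : 0 < h ->
  (forall q, derivable f q u) -> (forall q, derivable ('D_u f) q v) ->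
  exists s t, [/\ 0 <= s <= h, 0 <= t <= h &
    f (p + h *: u + h *: v) - f (p + h *: u) - f (p + h *: v) + f p
      = h ^+ 2 * 'D_v ('D_u f) (p + s *: u + t *: v)].
Proof.
move=> h0 du duv.
pose phi := (fun t => f (p + h *: v + t *: u)) - (fun t => f (p + t *: u)).
have dphi t : derivable phi t 1 by apply: derivableB; rewrite derivable_line.
have [s sh Es] := MVT_derivable h0 dphi.
have Dphi : 'D_1 phi s = 'D_u f (p + s *: u + h *: v) - 'D_u f (p + s *: u).
  by rewrite deriveB ?derivable_line // !derive_line addrAC.
pose psi := fun t : R => 'D_u f (p + s *: u + t *: v).
have dpsi t : derivable psi t 1 by rewrite /psi (derivable_line ('D_u f)).
have [t th Et] := MVT_derivable h0 dpsi.
exists s, t; split => //.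
rewrite /psi (derive_line ('D_u f)) scale0r addr0 in Et.
rewrite expr2 mulrC mulrA -Et -Dphi -Es /phi !fctE scale0r !addr0.
by rewrite [p + h *: v + _]addrAC; lra.
Qed.

Let shift_in_ball p u v s t h d : 0 <= s <= h -> 0 <= t <= h ->
  h * (`|u| + `|v|) < d -> ball p d (p + s *: u + t *: v).
Proof.
move=> /andP[s0 sh] /andP[t0 th] hd; rewrite -ball_normE /=.
rewrite -addrA opprD addrA subrr add0r normrN.
apply: le_lt_trans (ler_normD _ _) _; rewrite !normrZ !ger0_norm //.
by apply: le_lt_trans hd; rewrite mulrDr lerD // ler_wpM2r.
Qed.

Lemma eq_of_near_coincidence (A B : V -> R) p :
  {for p, continuous A} -> {for p, continuous B} ->
  (forall d, 0 < d -> exists x y, [/\ ball p d x, ball p d y & A x = B y]) ->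
  A p = B p.
Proof.
move=> cA cB close; apply/eqP; rewrite -subr_eq0 -normr_le0.
apply/ler_addgt0Pr => e e0; have e20 : 0 < e / 2 by rewrite divr_gt0.
have /nbhs_ballP[d d0 near_p] :
    \forall q \near p, `|A p - A q| < e / 2 /\ `|B p - B q| < e / 2.
  by apply/near_andP; split; apply: (cvgrPdist_lt _ _).1.
have [x [y [px py Axy]]] := close d d0.
have [[Ax _] [_ By]] := (near_p x px, near_p y py).
rewrite add0r (splitr e) (_ : A p - B p = (A p - A x) - (B p - B y)).
  by rewrite (le_trans (ler_normB _ _)) // ltW // ltrD.
by rewrite Axy opprB addrA subrK.
Qed.

(* Both mixed derivatives equal the second difference of f on the
   parallelogram spanned by h u and h v, divided by h^2, at points within
   h (|u| + |v|) of p. *)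
Lemma schwarz f p u v :
  (forall q, derivable f q u) -> (forall q, derivable f q v) ->
  (forall q, derivable ('D_u f) q v) -> (forall q, derivable ('D_v f) q u) ->
  {for p, continuous ('D_v ('D_u f))} -> {for p, continuous ('D_u ('D_v f))} ->
  'D_v ('D_u f) p = 'D_u ('D_v f) p.
Proof.
move=> du dv duv dvu cA cB; apply: eq_of_near_coincidence cA cB _ => d d0.
have X0 : 0 <= `|u| + `|v| by rewrite addr_ge0.
pose h := d / (`|u| + `|v| + 1).
have h0 : 0 < h by rewrite divr_gt0 // ltr_wpDl.
have hX : h * (`|u| + `|v|) < d.
  by rewrite mulrAC ltr_pdivrMr ?ltr_wpDl // ltr_pM2l //; lra.
have [s [t [sh th EA]]] := second_difference_MVT p h0 du duv.
have [s' [t' [sh' th' EB]]] := second_difference_MVT p h0 dv dvu.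
exists (p + s *: u + t *: v), (p + s' *: v + t' *: u); split.
- exact (shift_in_ball p sh th hX).
- by apply: (shift_in_ball p sh' th'); rewrite addrC.
- apply: (mulfI (_ : h ^+ 2 != 0)); first by rewrite expf_neq0 // gt_eqF.
  by rewrite -EA -EB [p + h *: v + _]addrAC; lra.
Qed.

Lemma smooth_derive_comm f :
  smooth f -> forall u v, 'D_v ('D_u f) = 'D_u ('D_v f).
Proof.
move=> sf u v; apply/funext => p; apply: schwarz => [q|q|q|q||].
- exact: diff_derivable (sf [::] q).
- exact: diff_derivable (sf [::] q).
- exact: diff_derivable (sf [:: u] q).
- exact: diff_derivable (sf [:: v] q).
- exact: differentiable_continuous (sf [:: u; v] p).
- exact: differentiable_continuous (sf [:: v; u] p).
Qed.

End Schwarz.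

Section DeriveLinear.
Variables (R : realType) (V V' W : normedModType R).

Let linear_quotient (c : V -> W) p e : linear c ->
  \forall h \near (0 : R)^', h^-1 *: ((c \o shift p) (h *: e) - c p) = c e.
Proof.
move=> lc; near=> h; have h0 : h != 0 by near: h; exact: nbhs_dnbhs_neq.
by rewrite /= lc addrK scalerA mulVf // scale1r.
Unshelve. all: by end_near.
Qed.

Lemma derivable_linear (c : V -> W) p e : linear c -> derivable c p e.
Proof. by move=> lc; apply: is_cvg_near_cst (linear_quotient p e lc). Qed.

Lemma derive_linear (c : V -> W) p e : linear c -> 'D_e c p = c e.
Proof. by move=> lc; apply: lim_near_cst (linear_quotient p e lc). Qed.

Let comp_linear_quotient (A : V -> V') (G : V' -> W) p e : linear A ->
  (fun h : R => h^-1 *: ((G \o A \o shift p) (h *: e) - (G \o A) p))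
  = (fun h : R => h^-1 *: ((G \o shift (A p)) (h *: A e) - G (A p))).
Proof. by move=> lA; apply/funext => h /=; rewrite lA. Qed.

Lemma derivable_comp_linear (A : V -> V') (G : V' -> W) p e : linear A ->
  derivable (G \o A) p e = derivable G (A p) (A e).
Proof. by move=> lA; rewrite /derivable comp_linear_quotient. Qed.

Lemma derive_comp_linear (A : V -> V') (G : V' -> W) p e : linear A ->
  'D_e (G \o A) p = 'D_(A e) G (A p).
Proof. by move=> lA; rewrite /derive comp_linear_quotient. Qed.

End DeriveLinear.

Section ProductRule.
Variables (R : realType) (V V' : normedModType R).
Variables (A : V -> V') (c : V -> R) (G : V' -> R) (p e : V).
Hypotheses (lA : linear A) (lc : linear c) (dG : derivable G (A p) (A e)).

Let dGA : derivable (G \o A) p e. Proof. by rewrite derivable_comp_linear. Qed.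

Lemma derivable_comp_linear_mul : derivable ((G \o A) * c) p e.
Proof. exact: derivableM dGA (derivable_linear lc). Qed.

Lemma derive_comp_linear_mul :
  'D_e ((G \o A) * c) p = 'D_(A e) G (A p) * c p + G (A p) * c e.
Proof.
rewrite deriveM; [|exact: dGA|exact: derivable_linear].
by rewrite (derive_linear _ _ lc) derive_comp_linear // addrC mulrC.
Qed.

End ProductRule.

Lemma sum_mul_eq_natr (T : pzRingType) (I : finType) (F : I -> T) (i : I) :
  \sum_j F j * (j == i)%:R = F i.
Proof.
by rewrite (bigD1 i) //= eqxx mulr1 big1 ?addr0 // => j /negbTE ->; rewrite mulr0.
Qed.

Section VerticallyLinear.
Variables (R : realType) (n k : nat).
Local Notation J0 := (Jet R k n).
Local Notation J := (Jet R k (n + n)).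

Definition base (p : J) : J0 := ((p.1.1, lsubmx p.1.2), usubmx p.2).
Definition vcoord (i : 'I_n) (p : J) : R := rsubmx p.1.2 0 i.
Definition vdcoord (i : 'I_n) (mu : 'I_k) (p : J) : R := dsubmx p.2 i mu.

Lemma base_linear : linear base.
Proof. by move=> a u v; rewrite /base /= !linearP. Qed.

Lemma vcoord_linear i : linear (vcoord i).
Proof. by move=> a u v; rewrite /vcoord /= linearP !mxE. Qed.

Lemma vdcoord_linear i mu : linear (vdcoord i mu).
Proof. by move=> a u v; rewrite /vdcoord /= linearP !mxE. Qed.

Definition vlin (G1 : 'I_n -> J0 -> R) (G2 : 'I_n -> 'I_k -> J0 -> R) : J -> R :=
  \sum_i (G1 i \o base) * vcoord i + \sum_i \sum_mu (G2 i mu \o base) * vdcoord i mu.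

Lemma vlinE G1 G2 p : vlin G1 G2 p =
  \sum_i G1 i (base p) * vcoord i p + \sum_i \sum_mu G2 i mu (base p) * vdcoord i mu p.
Proof.
rewrite /vlin fctE !fct_sumE; congr (_ + _).
by apply: eq_bigr => i _; rewrite fct_sumE.
Qed.

Lemma eq_vlin G1 G2 G1' G2' p : (forall i, G1 i = G1' i) ->
  (forall i mu, G2 i mu = G2' i mu) -> vlin G1 G2 p = vlin G1' G2' p.
Proof.
move=> E1 E2; congr (vlin _ _ p); apply/funext => i //.
by apply/funext => mu.
Qed.

Lemma derive_vlin G1 G2 p e :
  (forall i, derivable (G1 i) (base p) (base e)) ->
  (forall i mu, derivable (G2 i mu) (base p) (base e)) ->
  'D_e (vlin G1 G2) p =
    vlin (fun i => 'D_(base e) (G1 i)) (fun i mu => 'D_(base e) (G2 i mu)) p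
    + (\sum_i G1 i (base p) * vcoord i e
       + \sum_i \sum_mu G2 i mu (base p) * vdcoord i mu e).
Proof.
move=> d1 d2.
have dT1 i := derivable_comp_linear_mul base_linear (vcoord_linear i) (d1 i).
have dT2 i mu := derivable_comp_linear_mul base_linear (vdcoord_linear i mu) (d2 i mu).
have dS2 i := derivable_sum (dT2 i).
rewrite deriveD; [|exact: derivable_sum dT1|exact: derivable_sum dS2].
rewrite !derive_sum // vlinE addrACA; congr (_ + _); rewrite -big_split.
  apply: eq_bigr => i _.
  exact: derive_comp_linear_mul base_linear (vcoord_linear i) (d1 i).
apply: eq_bigr => i _; rewrite derive_sum // -big_split; apply: eq_bigr => mu _.
exact: derive_comp_linear_mul base_linear (vdcoord_linear i mu) (d2 i mu).
Qed.

Lemma derive_vlin_horizontal G1 G2 p e :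
  (forall i, vcoord i e = 0) -> (forall i mu, vdcoord i mu e = 0) ->
  (forall i, derivable (G1 i) (base p) (base e)) ->
  (forall i mu, derivable (G2 i mu) (base p) (base e)) ->
  'D_e (vlin G1 G2) p =
    vlin (fun i => 'D_(base e) (G1 i)) (fun i mu => 'D_(base e) (G2 i mu)) p.
Proof.
move=> e1 e2 d1 d2; rewrite derive_vlin // !big1 ?addr0 // => i _.
  by apply: big1 => mu _; rewrite e2 mulr0.
by rewrite e1 mulr0.
Qed.

Lemma derive_vlin_vertical G1 G2 p e : base e = 0 ->
  'D_e (vlin G1 G2) p = \sum_i G1 i (base p) * vcoord i e
                        + \sum_i \sum_mu G2 i mu (base p) * vdcoord i mu e.
Proof.
move=> e0; rewrite derive_vlin ?e0; try by move=> *; exact: derivable0.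
rewrite vlinE [X in X + _ + _ = _]big1 ?add0r => [|i _]; last by rewrite derive0 mul0r.
rewrite [X in X + _ = _]big1 ?add0r // => i _.
by apply: big1 => mu _; rewrite derive0 mul0r.
Qed.

Lemma base_eq_lshift i : base (eq_ R k (lshift n i)) = eq_ R k i.
Proof.
by rewrite /base /= !linear0; congr (_, _, _); apply/rowP => j; rewrite !mxE eq_lshift.
Qed.

Lemma base_eqd_lshift i mu : base (eqd R (lshift n i) mu) = eqd R i mu.
Proof.
by rewrite /base /= !linear0; congr (_, _); apply/matrixP => a b; rewrite !mxE eq_lshift.
Qed.

Lemma base_eq_rshift i : base (eq_ R k (rshift n i)) = 0.
Proof.
rewrite /base /= !linear0; congr (_, _, _).
by apply/rowP => j; rewrite !mxE eq_lrshift andbF.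
Qed.

Lemma base_eqd_rshift i mu : base (eqd R (rshift n i) mu) = 0.
Proof.
by rewrite /base /= !linear0; congr (_, _); apply/matrixP => a b; rewrite !mxE eq_lrshift.
Qed.

Lemma vcoord_eq_lshift i j : vcoord j (eq_ R k (lshift n i)) = 0.
Proof. by rewrite /vcoord /= !mxE eq_rlshift andbF. Qed.

Lemma vcoord_eq_rshift i j : vcoord j (eq_ R k (rshift n i)) = (j == i)%:R.
Proof. by rewrite /vcoord /= !mxE eq_rshift. Qed.

Lemma vcoord_eqd I mu j : vcoord j (eqd R I mu) = 0.
Proof. by rewrite /vcoord /= linear0 mxE. Qed.

Lemma vdcoord_eq I j g : vdcoord j g (eq_ R k I) = 0.
Proof. by rewrite /vdcoord /= linear0 mxE. Qed.

Lemma vdcoord_eqd_lshift i mu j g : vdcoord j g (eqd R (lshift n i) mu) = 0.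
Proof. by rewrite /vdcoord /= !mxE eq_rlshift. Qed.

Lemma vdcoord_eqd_rshift i mu j g :
  vdcoord j g (eqd R (rshift n i) mu) = ((j, g) == (i, mu))%:R.
Proof. by rewrite /vdcoord /= !mxE eq_rshift xpair_eqE. Qed.

Lemma derive_vlin_eq_lshift G1 G2 p i :
  (forall j, derivable (G1 j) (base p) (eq_ R k i)) ->
  (forall j g, derivable (G2 j g) (base p) (eq_ R k i)) ->
  'D_(eq_ R k (lshift n i)) (vlin G1 G2) p =
    vlin (fun j => 'D_(eq_ R k i) (G1 j)) (fun j g => 'D_(eq_ R k i) (G2 j g)) p.
Proof.
move=> d1 d2; rewrite derive_vlin_horizontal ?base_eq_lshift // => *.
- exact: vcoord_eq_lshift.
- exact: vdcoord_eq.
Qed.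

Lemma derive_vlin_eqd_lshift G1 G2 p i mu :
  (forall j, derivable (G1 j) (base p) (eqd R i mu)) ->
  (forall j g, derivable (G2 j g) (base p) (eqd R i mu)) ->
  'D_(eqd R (lshift n i) mu) (vlin G1 G2) p =
    vlin (fun j => 'D_(eqd R i mu) (G1 j)) (fun j g => 'D_(eqd R i mu) (G2 j g)) p.
Proof.
move=> d1 d2; rewrite derive_vlin_horizontal ?base_eqd_lshift // => *.
- exact: vcoord_eqd.
- exact: vdcoord_eqd_lshift.
Qed.

Lemma derive_vlin_eq_rshift G1 G2 p i :
  'D_(eq_ R k (rshift n i)) (vlin G1 G2) p = G1 i (base p).
Proof.
rewrite derive_vlin_vertical ?base_eq_rshift // [X in _ + X]big1 ?addr0 => [|j _].
  by under eq_bigr do rewrite vcoord_eq_rshift; rewrite sum_mul_eq_natr.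
by apply: big1 => g _; rewrite vdcoord_eq mulr0.
Qed.

Lemma derive_vlin_eqd_rshift G1 G2 p i mu :
  'D_(eqd R (rshift n i) mu) (vlin G1 G2) p = G2 i mu (base p).
Proof.
rewrite derive_vlin_vertical ?base_eqd_rshift // big1 ?add0r => [|j _]; last first.
  by rewrite vcoord_eqd mulr0.
under eq_bigr do under eq_bigr do rewrite vdcoord_eqd_rshift.
by rewrite pair_big /= (sum_mul_eq_natr (fun x => G2 x.1 x.2 (base p))).
Qed.

End VerticallyLinear.
Arguments base {R n k}.

Section PartialsOfLtilde.
Variables (R : realType) (n k : nat) (L : Jet R k n -> R).

Lemma Ltilde_vlin : Ltilde L = vlin (dq L) (dqd L).
Proof. by apply/funext => p; rewrite vlinE. Qed.

Lemma dq_Ltilde_rshift i : dq (Ltilde L) (rshift n i) = dq L i \o base.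
Proof. by apply/funext => p; rewrite Ltilde_vlin; exact: derive_vlin_eq_rshift. Qed.

Lemma dqd_Ltilde_rshift i mu : dqd (Ltilde L) (rshift n i) mu = dqd L i mu \o base.
Proof. by apply/funext => p; rewrite Ltilde_vlin; exact: derive_vlin_eqd_rshift. Qed.

Lemma dqd2_Ltilde_rshift_lshift i mu j nu p :
  dqd (dqd (Ltilde L) (rshift n i) mu) (lshift n j) nu p = dqd (dqd L i mu) j nu (base p).
Proof.
rewrite dqd_Ltilde_rshift /dqd derive_comp_linear ?base_eqd_lshift //.
exact: base_linear.
Qed.

Lemma dqd2_Ltilde_rshift_rshift i mu j nu p :
  dqd (dqd (Ltilde L) (rshift n i) mu) (rshift n j) nu p = 0.
Proof.
rewrite dqd_Ltilde_rshift /dqd derive_comp_linear ?base_eqd_rshift ?derive0 //.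
exact: base_linear.
Qed.

Hypothesis hL : smooth L.

Let dL vs q e : derivable (iderive vs L) q e.
Proof. exact: diff_derivable (hL vs q). Qed.

Lemma dq_Ltilde_lshift i :
  dq (Ltilde L) (lshift n i) = vlin (fun j => dq (dq L j) i) (fun j g => dq (dqd L j g) i).
Proof.
apply/funext => p; rewrite Ltilde_vlin; apply: derive_vlin_eq_lshift => [j | j g].
- exact: (@dL [:: eq_ R k j]).
- exact: (@dL [:: eqd R j g]).
Qed.

Lemma dqd_Ltilde_lshift i mu : dqd (Ltilde L) (lshift n i) mu =
  vlin (fun j => dq (dqd L i mu) j) (fun j g => dqd (dqd L i mu) j g).
Proof.
apply/funext => p; rewrite {1}/dqd Ltilde_vlin derive_vlin_eqd_lshift => [|j|j g].
- apply: eq_vlin => [j | j g].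
  + exact: smooth_derive_comm hL (eq_ R k j) (eqd R i mu).
  + exact: smooth_derive_comm hL (eqd R j g) (eqd R i mu).
- exact: (@dL [:: eq_ R k j]).
- exact: (@dL [:: eqd R j g]).
Qed.

Lemma dqd2_Ltilde_lshift_rshift i mu j nu p :
  dqd (dqd (Ltilde L) (lshift n i) mu) (rshift n j) nu p = dqd (dqd L i mu) j nu (base p).
Proof. by rewrite dqd_Ltilde_lshift; exact: derive_vlin_eqd_rshift. Qed.

End PartialsOfLtilde.

Section AlongProlongation.
Variables (R : realType) (n k : nat) (psi : 'rV[R]_k -> 'rV[R]_(n + n)).
Local Notation q := (fun y => lsubmx (psi y)).
Local Notation v := (fun y => rsubmx (psi y)).

Lemma EL_iff F i x (A : 'I_k -> 'rV[R]_k -> R) B :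
  (forall mu, (fun y => dqd F i mu (j1 psi y)) = A mu) -> dq F i (j1 psi x) = B ->
  EL F psi i x <-> \sum_mu dtot (A mu) mu x - B = 0.
Proof. by move=> EA <-; rewrite /EL; under eq_bigr => mu _ do rewrite EA. Qed.

Lemma base_j1 y : base (j1 psi y) = j1 q y.
Proof.
rewrite /base /j1 /=; congr (_, _); apply/matrixP => i mu; rewrite !mxE.
by apply: (congr1 (fun f => 'D_(ek R mu) f y)); apply/funext => z; rewrite mxE.
Qed.

Lemma vdcoord_j1 j g y : vdcoord j g (j1 psi y) = 'D_(ek R g) (fun z => v z 0 j) y.
Proof.
rewrite /vdcoord !mxE; apply: (congr1 (fun f => 'D_(ek R g) f y)).
by apply/funext => z; rewrite mxE.
Qed.

Lemma vlin_j1 G1 G2 y : vlin G1 G2 (j1 psi y) =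
  \sum_j G1 j (j1 q y) * v y 0 j
  + \sum_j \sum_g G2 j g (j1 q y) * 'D_(ek R g) (fun z => v z 0 j) y.
Proof.
rewrite vlinE base_j1; congr (_ + _); apply: eq_bigr => j _; apply: eq_bigr => g _.
by rewrite vdcoord_j1.
Qed.

Variable L : Jet R k n -> R.

Lemma EL_Ltilde_rshift i x : EL (Ltilde L) psi (rshift n i) x <-> EL L q i x.
Proof.
apply: EL_iff => [mu|]; last by rewrite dq_Ltilde_rshift /= base_j1.
by apply/funext => y; rewrite dqd_Ltilde_rshift /= base_j1.
Qed.

Hypothesis hL : smooth L.

Lemma EL_Ltilde_lshift i x : EL (Ltilde L) psi (lshift n i) x <-> Jacobi L q v i x.
Proof.
rewrite /Jacobi; cbv zeta; rewrite -addrA -opprD.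
apply: EL_iff => [mu|]; last by rewrite (dq_Ltilde_lshift hL) vlin_j1.
by apply/funext => y; rewrite (dqd_Ltilde_lshift hL) vlin_j1.
Qed.

End AlongProlongation.

Section Regularity.
Variable R : realType.

Lemma unvec_mxvec_index m k (i : 'I_m) (mu : 'I_k) :
  unvec (mxvec_index i mu) = (i, mu).
Proof. by rewrite /unvec cast_ordK enum_rankK. Qed.

Lemma mulmx_velHessian k m (L : Jet R k m -> R) p (z : 'rV_(m * k)) j nu :
  (z *m velHessian L p) 0 (mxvec_index j nu) =
  \sum_i \sum_mu z 0 (mxvec_index i mu) * dqd (dqd L i mu) j nu p.
Proof.
rewrite mxE (reindex (uncurry (@mxvec_index m k))) /=; last exact: curry_mxvec_bij.
rewrite pair_big; apply: eq_bigr => -[i mu] _.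
by rewrite mxE !unvec_mxvec_index.
Qed.

Lemma regularP k m (L : Jet R k m -> R) : regular L <->
  forall p (W : 'I_m -> 'I_k -> R),
    (forall j nu, \sum_i \sum_mu W i mu * dqd (dqd L i mu) j nu p = 0) ->
    forall i mu, W i mu = 0.
Proof.
split=> [regL p W hW i mu | kerL p].
  pose z := mxvec (\matrix_(i, mu) W i mu).
  have zW i' mu' : z 0 (mxvec_index i' mu') = W i' mu' by rewrite mxvecE mxE.
  have Hfree : row_free (velHessian L p) by rewrite row_free_unit.
  suff /eqP z0 : z == 0 by rewrite -zW z0 mxE.
  rewrite -(mulmx_free_eq0 _ Hfree); apply/eqP/rowP => b.
  case/mxvec_indexP: b => j nu; rewrite mulmx_velHessian mxE.
  by under eq_bigr do under eq_bigr do rewrite zW; exact: hW.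
rewrite -row_free_unit; apply: inj_row_free => z zH.
apply/rowP => a; case/mxvec_indexP: a => i mu; rewrite mxE.
apply: (kerL p (fun i mu => z 0 (mxvec_index i mu))) => j nu.
by rewrite -mulmx_velHessian zH mxE.
Qed.

Lemma regular_Ltilde n k (L : Jet R k n -> R) :
  smooth L -> regular L -> regular (Ltilde L).
Proof.
move=> hL /regularP regL; apply/regularP => p W hW.
have Wq0 i mu : W (lshift n i) mu = 0.
  apply: (regL (base p) (fun i mu => W (lshift n i) mu)) => {i mu} j nu.
  apply: etrans (hW (rshift n j) nu); rewrite big_split_ord [X in _ = _ + X]big1 ?addr0.
    apply: eq_bigr => i _; apply: eq_bigr => mu _.
    by rewrite (dqd2_Ltilde_lshift_rshift hL).
  by move=> i _; apply: big1 => mu _; rewrite dqd2_Ltilde_rshift_rshift mulr0.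
have Wv0 i mu : W (rshift n i) mu = 0.
  apply: (regL (base p) (fun i mu => W (rshift n i) mu)) => {i mu} j nu.
  apply: etrans (hW (lshift n j) nu); rewrite big_split_ord [X in _ = X + _]big1 ?add0r.
    apply: eq_bigr => i _; apply: eq_bigr => mu _.
    by rewrite dqd2_Ltilde_rshift_lshift.
  by move=> i _; apply: big1 => mu _; rewrite Wq0 mul0r.
by move=> I mu; rewrite -(splitK I); case: (fintype.split I) => i /=.
Qed.

End Regularity.

Theorem mainTheorem1 (R : realType) (n k : nat) (hk : (0 < k)%N)
  (L : Jet R k n -> R) (hL : smooth L) :
  (forall (U : set 'rV[R]_k) (psi : 'rV[R]_k -> 'rV[R]_(n + n)),
      open U -> smooth_on U psi ->
      ((forall x, U x -> forall i : 'I_n,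
           EL (Ltilde L) psi (lshift n i) x /\ EL (Ltilde L) psi (rshift n i) x)
       <->
       (forall x, U x -> forall i : 'I_n,
           Jacobi L (fun y => lsubmx (psi y)) (fun y => rsubmx (psi y)) i x
           /\ EL L (fun y => lsubmx (psi y)) i x)))
  /\ (regular L -> regular (Ltilde L)).
Proof.
split; last exact: regular_Ltilde.
move=> U psi _ _.
by split=> H x Ux i; have [H1 H2] := H x Ux i;
  rewrite (EL_Ltilde_lshift psi hL) (EL_Ltilde_rshift psi L) in H1 H2 *.
Qed.
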